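(* Let $\mathcal{G}$, $u$, $v$ be as in the context (finite bicoloured graph with a pure green path from $u$ to $v$), and let $e$ be a red edge whose weight $\omega(e)$ is a random variable with probability density function $f_e:(0,\infty)\to[0,\phi_e]$ for some $\phi_e>0$, independent of all other edge weights. Then for every $r\ge0$ and $\varepsilon\ge0$, $$\mathbb{P}\big(r<\Delta_e(r)\le r+\varepsilon\big)\le\phi_e\cdot\varepsilon .$$
   Context: $\mathcal{G}=\langle V,E,\omega,\lambda\rangle$ is a finite weighted coloured--edge graph (directed multigraph, weights $\omega:E\to\mathbb{R}^+$, colours $\lambda:E\to M$) with $M=\{\text{red},\text{green}\}$. A path from $u$ to $v$ is a sequence of consecutive edges from $u$ to $v$ visiting no vertex twice; $\omega_{\text{red}}(p)$, $\omega_{\text{green}}(p)$ denote the sums of weights of the red, resp. green, edges of $p$. It is assumed there is a path from $u$ to $v$ all of whose edges are green. For a red edge $e$ and $r\ge0$, define: $g_r$ is the least value of $\omega_{\text{green}}(p)$ over all paths $p$ from $u$ to $v$ not containing $e$ with $\omega_{\text{red}}(p)\le r$ (such paths exist, e.g. the pure green path, provided it avoids $e$, which it does since $e$ is red). Then $\Delta_e(r)$ is the least value of $\omega_{\text{red}}(q)$ over all paths $q$ from $u$ to $v$ that contain $e$ and satisfy $\omega_{\text{green}}(q)<g_r$; if there is no such path, $\Delta_e(r)=\infty$. (Thus $\Delta_e(r)$ is a random variable when edge weights are random.) *)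

From HB Require Import structures.
From mathcomp Require Import all_boot all_order all_algebra.
From mathcomp Require Import all_classical all_reals all_analysis.
Set Implicit Arguments. Unset Strict Implicit. Unset Printing Implicit Defensive.
Import Order.TTheory GRing.Theory Num.Theory.
Local Open Scope classical_set_scope.
Local Open Scope ring_scope.

Inductive colour := Red | Green.
Definition is_red (c : colour) : bool := if c is Red then true else false.
Definition is_green (c : colour) : bool := if c is Green then true else false.

Section Graph.
Variables (V E : finType) (src tgt : E -> V).

Fixpoint consecutive (a : V) (p : seq E) : bool :=
  if p is e :: p' then (src e == a) && consecutive (tgt e) p' else true.

Definition is_path (a b : V) (p : seq E) : Prop :=
  [/\ consecutive a p, last a (map tgt p) = b & uniq (a :: map tgt p)].

Variable R : realType.
Variable col : E -> colour.

Definition w_red (w : E -> R) (p : seq E) : R :=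
  \sum_(e <- p | is_red (col e)) w e.
Definition w_green (w : E -> R) (p : seq E) : R :=
  \sum_(e <- p | is_green (col e)) w e.

Definition g_r (u v : V) (e : E) (w : E -> R) (r : R) : \bar R :=
  ereal_inf [set (w_green w p)%:E | p in
               [set p | is_path u v p /\ e \notin p /\ w_red w p <= r]].

(* Delta_e(r) : least red weight over u-v paths through e whose green weight
   is < g_r;  +oo if there is no such path. *)
Definition Delta (u v : V) (e : E) (w : E -> R) (r : R) : \bar R :=
  ereal_inf [set (w_red w q)%:E | q in
               [set q | is_path u v q /\ e \in q /\
                        ((w_green w q)%:E < g_r u v e w r)%E]].
End Graph.

From HB Require Import structures.
From mathcomp Require Import all_boot all_order all_algebra.
From mathcomp Require Import all_classical all_reals all_analysis.
From mathcomp Require Import measurable_realfun ring lra.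
Set Implicit Arguments. Unset Strict Implicit. Unset Printing Implicit Defensive.
Import Order.TTheory GRing.Theory Num.Theory.
Local Open Scope classical_set_scope.
Local Open Scope ring_scope.

(* Idea: Delta_e(r) = w(e) + C, where C is Delta_e(r) computed with w(e) set to
   0; C >= 0 and C only depends on the other edge weights, so it is independent
   of w(e).  Cut the range of C into cells [k d, (k+1) d).  On the k-th cell
   the event r < Delta_e(r) <= r + eps forces w(e) into an interval of length
   eps + d, of probability at most phi (eps + d); by independence and
   disjointness of the cells the event has probability at most phi (eps + d),
   and d > 0 is arbitrary. *)

Lemma is_path_uniq (V E : finType) (src tgt : E -> V) a b p :
  is_path src tgt a b p -> uniq p.
Proof. by case=> _ _ /andP[_ /map_uniq]. Qed.

Definition zero_at {R : realType} {E : eqType} (e : E) (w : E -> R) : E -> R :=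
  fun e' => if e' == e then 0 else w e'.

Section SplitOffEdge.
Variables (R : realType) (V E : finType) (src tgt : E -> V) (col : E -> colour).
Variables (u v : V) (e : E).
Implicit Types (w : E -> R) (p q : seq E) (r : R).

Lemma Delta_ge0 w r :
  (forall e', 0 <= w e') -> (0 <= Delta src tgt col u v e w r)%E.
Proof.
move=> w_ge0; apply/ereal_infP => _ [q _ <-].
by rewrite lee_fin; apply: sumr_ge0 => i _.
Qed.

Hypothesis e_red : col e = Red.

Lemma w_red_zero_at w p : e \notin p -> w_red col (zero_at e w) p = w_red col w p.
Proof.
move=> ep; rewrite /w_red big_mkcond [RHS]big_mkcond; apply: eq_big_seq => x xp /=.
by rewrite /zero_at; case: eqP => // xe; move: ep; rewrite -xe xp.
Qed.

Lemma w_green_zero_at w p : w_green col (zero_at e w) p = w_green col w p.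
Proof.
apply: eq_bigr => x xg; rewrite /zero_at; case: eqP => // xe.
by move: xg; rewrite xe e_red.
Qed.

Lemma g_r_zero_at w r :
  g_r src tgt col u v e (zero_at e w) r = g_r src tgt col u v e w r.
Proof.
congr ereal_inf; apply/seteqP; split=> _ [p [pp [ep pr]] <-]; exists p;
  rewrite ?w_green_zero_at //; split=> //; split=> //.
- by rewrite w_red_zero_at in pr.
- by rewrite w_red_zero_at.
Qed.

Lemma w_red_through w q :
  uniq q -> e \in q -> w_red col w q = w e + w_red col (zero_at e w) q.
Proof.
move=> uq eq; rewrite /w_red big_mkcond [X in _ = _ + X]big_mkcond /= (bigD1_seq e) //=.
rewrite [X in _ = _ + X](bigD1_seq e) //= e_red /= /zero_at eqxx add0r; congr (_ + _).
by apply: eq_bigr => x /negPf ->.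
Qed.

Lemma Delta_split_off w r :
  Delta src tgt col u v e w r =
  ((w e)%:E + Delta src tgt col u v e (zero_at e w) r)%E.
Proof.
rewrite /Delta g_r_zero_at.
set Q := [set q | is_path src tgt u v q /\ e \in q /\
                  ((w_green col w q)%:E < g_r src tgt col u v e w r)%E].
have -> : [set q | is_path src tgt u v q /\ e \in q /\
      ((w_green col (zero_at e w) q)%:E < g_r src tgt col u v e w r)%E] = Q.
  by apply/seteqP; split=> q /=; rewrite w_green_zero_at.
have split_Q q : Q q -> w_red col w q = w e + w_red col (zero_at e w) q.
  by case=> qp [eq _]; apply: w_red_through => //; exact: is_path_uniq qp.
apply/eqP; rewrite eq_le; apply/andP; split.
- rewrite -leeBlDl //; apply/ereal_infP => _ [q Qq <-].
  rewrite leeBlDl // -EFinD -split_Q //.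
  by apply: ereal_inf_lbound; exists q.
- apply/ereal_infP => _ [q Qq <-]; rewrite split_Q // EFinD leeD2l //.
  by apply: ereal_inf_lbound; exists q.
Qed.

End SplitOffEdge.

Lemma countable_bigcapT_measurable d (T : measurableType d) (U : countType)
  (F : U -> set T) : (forall i, measurable (F i)) -> measurable (\bigcap_i F i).
Proof.
move=> mF; rewrite -(setCK (\bigcap_i F i)) setC_bigcap; apply: measurableC.
by apply: countable_bigcupT_measurable; [exact: countableP|move=> i; exact: measurableC].
Qed.

Lemma lte_ereal_inf_image (R : realType) (U : Type) (S : set U) (F : U -> R) (a : R) :
  (a%:E < ereal_inf [set (F p)%:E | p in S])%E <->
  exists n : nat, forall p, S p -> a + n.+1%:R^-1 <= F p.
Proof.
split.
- set g := ereal_inf _; move=> ag.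
  have lb p : S p -> (g <= (F p)%:E)%E by move=> Sp; apply: ereal_inf_lbound; exists p.
  move: ag lb; case: g => [y| |] //.
  + rewrite lte_fin => /ltr_add_invr [k Hk] lb; exists k => p Sp.
    by apply: (le_trans (ltW Hk)); rewrite -lee_fin; exact: lb.
  + by move=> _ lb; exists 0%N => p /lb.
- move=> [n Hn]; apply: (@lt_le_trans _ _ (a + n.+1%:R^-1)%:E).
    by rewrite lte_fin ltrDl invr_gt0 ltr0n.
  by apply/ereal_infP => _ [p Sp <-]; rewrite lee_fin; exact: Hn.
Qed.

Lemma lee_fin_invS (R : realType) (x : \bar R) (t : R) :
  (x <= t%:E)%E <-> forall n : nat, (x < (t + n.+1%:R^-1)%:E)%E.
Proof.
split.
- by move=> xt n; apply: (le_lt_trans xt); rewrite lte_fin ltrDl invr_gt0 ltr0n.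
- case: x => [y| |] H //; last by rewrite leNye.
  + rewrite lee_fin leNgt; apply/negP => /ltr_add_invr [k Hk].
    by move: (H k); rewrite lte_fin => /(lt_trans Hk); rewrite ltxx.
  + by move: (H 0%N).
Qed.

Section MeasurableDelta.
Variables (R : realType) (V E : finType) (src tgt : E -> V) (col : E -> colour).
Variables (u v : V) (e : E) (d : measure_display) (T : measurableType d).
Variables (w : T -> E -> R) (r : R).
Hypothesis w_meas : forall e', measurable_fun setT (fun x => w x e').

Lemma measurable_sum_weights (P : pred E) p :
  measurable_fun setT (fun x => \sum_(e' <- p | P e') w x e').
Proof.
elim: p => [|a p IH]; first by under eq_fun do rewrite big_nil; exact: measurable_cst.
under eq_fun do rewrite big_cons; case: (P a) => //.
exact: measurable_funD.
Qed.

Lemma measurable_ltr_set (f g : T -> R) :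
  measurable_fun setT f -> measurable_fun setT g -> measurable [set x | f x < g x].
Proof.
move=> mf mg; have mtrue : measurable [set true] by [].
by have := measurable_fun_ltr mf mg measurableT mtrue; rewrite setTI.
Qed.

Lemma measurable_ler_set (f g : T -> R) :
  measurable_fun setT f -> measurable_fun setT g -> measurable [set x | f x <= g x].
Proof.
move=> mf mg; have mtrue : measurable [set true] by [].
by have := measurable_fun_ler mf mg measurableT mtrue; rewrite setTI.
Qed.

Lemma measurable_lt_g_r (a : T -> R) : measurable_fun setT a ->
  measurable [set x | ((a x)%:E < g_r src tgt col u v e (w x) r)%E].
Proof.
move=> ma.
pose Sn (n : nat) p := [set x | (is_path src tgt u v p /\ e \notin p) ->
  w_red col (w x) p <= r -> a x + n.+1%:R^-1 <= w_green col (w x) p].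
have -> : [set x | ((a x)%:E < g_r src tgt col u v e (w x) r)%E] =
    \bigcup_n \bigcap_p Sn n p.
  apply/seteqP; split => x /=.
  - by move/lte_ereal_inf_image => [n Hn]; exists n => // p _ [pp ep] pr; exact: Hn.
  - by move=> [n _ Hn]; apply/lte_ereal_inf_image; exists n => p [pp [ep pr]]; exact: Hn.
apply: bigcupT_measurable => n; apply: countable_bigcapT_measurable => p.
have [pe|pe] := pselect (is_path src tgt u v p /\ e \notin p); last first.
  by rewrite (_ : Sn n p = setT) //; apply/seteqP; split => x // _ /pe.
rewrite (_ : Sn n p = ~` [set x | w_red col (w x) p <= r] `|`
                      [set x | a x + n.+1%:R^-1 <= w_green col (w x) p]).
  apply: measurableU; last exact/measurable_ler_set/measurable_sum_weights/measurable_funD.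
  exact/measurableC/measurable_ler_set/measurable_cst/measurable_sum_weights.
apply/seteqP; split => x; rewrite /Sn /=; last by case=> [Hx _ /Hx|].
by move=> /(_ pe) Hx; have [/Hx|] := pselect (w_red col (w x) p <= r); [right|left].
Qed.

Let D x := Delta src tgt col u v e (w x) r.

Lemma measurable_Delta_lt t : measurable [set x | (D x < t%:E)%E].
Proof.
have -> : [set x | (D x < t%:E)%E] = \bigcup_(q in [set: seq E])
   ([set x | is_path src tgt u v q /\ e \in q] `&`
    ([set x | ((w_green col (w x) q)%:E < g_r src tgt col u v e (w x) r)%E] `&`
     [set x | w_red col (w x) q < t])).
  apply/seteqP; split => x /=.
  - by move=> /ereal_inf_ltP [_ [q [qp [eq qg]] <-]]; rewrite lte_fin => qt; exists q.
  - move=> [q _ [[qp eq] [qg qt]]]; apply/ereal_inf_ltP.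
    by exists (w_red col (w x) q)%:E; [exists q|rewrite lte_fin].
apply: countable_bigcupT_measurable; first exact: countableP.
move=> q; have [qe|qe] := pselect (is_path src tgt u v q /\ e \in q); last first.
  by rewrite (_ : [set _ | _] = set0) ?set0I //; apply/seteqP; split.
rewrite (_ : [set _ | _] = setT) ?setTI; last by apply/seteqP; split.
apply: measurableI; first exact/measurable_lt_g_r/measurable_sum_weights.
exact/measurable_ltr_set/measurable_cst/measurable_sum_weights.
Qed.

Lemma measurable_Delta_ge t : measurable [set x | (t%:E <= D x)%E].
Proof.
rewrite (_ : [set _ | _] = ~` [set x | (D x < t%:E)%E]).
  exact/measurableC/measurable_Delta_lt.
by apply/seteqP; split => x /=; rewrite leNgt => /negP.
Qed.

Lemma measurable_Delta_le t : measurable [set x | (D x <= t%:E)%E].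
Proof.
rewrite (_ : [set _ | _] = \bigcap_n [set x | (D x < (t + n.+1%:R^-1)%:E)%E]).
  by apply: bigcapT_measurable => n; exact: measurable_Delta_lt.
apply/seteqP; split => x /=; first by move/lee_fin_invS => H n _; exact: H.
by move=> H; apply/lee_fin_invS => n; exact: H.
Qed.

Lemma measurable_Delta_gt t : measurable [set x | (t%:E < D x)%E].
Proof.
rewrite (_ : [set _ | _] = ~` [set x | (D x <= t%:E)%E]).
  exact/measurableC/measurable_Delta_le.
by apply/seteqP; split => x /=; rewrite ltNge => /negP.
Qed.

End MeasurableDelta.

Section IndependentOfEvent.
Variables (d : measure_display) (T : measurableType d) (R : realType).
Variables (P : probability T R) (A : set T).
Hypothesis mA : measurable A.

Definition independent_of : set (set T) :=
  [set B | measurable B /\ P (A `&` B) = (P A * P B)%E].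

Lemma independent_of_dynkin : dynkin independent_of.
Proof.
have finP B : measurable B -> P B \is a fin_num by move=> mB; exact: fin_num_measure.
split.
- by split; [exact: measurableT|rewrite setIT probability_setT mule1].
- move=> B [mB AB]; split; first exact: measurableC.
  rewrite -setDE measureD // ?ltey_eq ?finP //.
  have -> : P (~` B) = (1 - P B)%E.
    rewrite -setTD measureD // ?ltey_eq ?finP // setTI.
    by congr (_ - _)%E; exact: probability_setT.
  transitivity (P A - P A * P B)%E; first by congr (_ - _)%E; exact: AB.
  rewrite -(fineK (finP _ mA)) -(fineK (finP _ mB)) -!EFinM -!EFinB.
  by congr EFin; ring.
- move=> F tF FA; have mF n : measurable (F n) by case: (FA n).
  split; first exact: bigcupT_measurable.
  rewrite setI_bigcupr measure_semi_bigcup //; first last.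
  + by apply: bigcupT_measurable => n; apply: measurableI.
  + exact: trivIset_setIl.
  + by move=> n; apply: measurableI.
  rewrite measure_semi_bigcup //; last exact: bigcupT_measurable.
  transitivity (\sum_(0 <= n <oo) ((fine (P A))%:E * P (F n)))%E.
    by apply: eq_eseriesr => n _; rewrite fineK ?finP //; case: (FA n).
  by rewrite nneseriesZl ?fineK ?finP.
Qed.

Lemma sigma_independent_of (G : set (set T)) :
  setI_closed G -> G `<=` independent_of -> <<s G >> `<=` independent_of.
Proof.
move=> GI GA; apply: lambda_system_subset => //.
exact/dynkin_lambda_system/independent_of_dynkin.
Qed.

End IndependentOfEvent.

Section OtherEdges.
Variables (R : realType) (E : finType) (d : measure_display) (T : measurableType d).
Variables (W : T -> E -> R) (e : E).

Definition cylinders_off : set (set T) :=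
  [set B | exists A : E -> set R, (forall e', measurable (A e')) /\
           B = [set x | forall e', e' != e -> A e' (W x e')]].

Lemma cylinders_off_setI_closed : setI_closed cylinders_off.
Proof.
move=> _ _ [A1 [mA1 ->]] [A2 [mA2 ->]]; exists (fun e' => A1 e' `&` A2 e'); split.
  by move=> e'; apply: measurableI.
apply/seteqP; split => x /=; first by move=> [H1 H2] e' ne; split; [exact: H1|exact: H2].
by move=> H; split => e' /H [].
Qed.

(* Equipping [T] with the sigma-algebra generated by [cylinders_off] lets the
   measurability lemmas for [Delta], applied to the weights [zero_at e (W x)],
   place the level sets of that [Delta] in this sigma-algebra. *)
Lemma zero_at_measurable_off e' :
  measurable_fun (setT : set (g_sigma_algebraType cylinders_off))
    (fun x => zero_at e (W x) e').
Proof.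
rewrite /zero_at; case: eqP => [_|/eqP ne]; first exact: measurable_cst.
move=> _ Y mY; rewrite setTI; apply: sub_sigma_algebra.
exists (fun e'' => if e'' == e' then Y else setT); split; first by move=> e''; case: eqP.
apply/seteqP; split => x /=; last by move=> /(_ e' ne); rewrite eqxx.
by move=> Ye'' e'' _; case: eqP => [->|].
Qed.

Hypothesis W_meas : forall e', measurable_fun setT (fun x => W x e').

Lemma measurable_edge_preimage e' (A : set R) :
  measurable A -> measurable [set x | A (W x e')].
Proof. by move=> mA; have := W_meas e' measurableT mA; rewrite setTI. Qed.

Lemma cylinders_off_measurable B : cylinders_off B -> measurable B.
Proof.
move=> [A [mA ->]].
rewrite (_ : [set _ | _] = \bigcap_e' [set x | e' != e -> A e' (W x e')]); last first.
  by apply/seteqP; split => x /= H e'; [move=> _|]; exact: H.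
apply: countable_bigcapT_measurable => e'; have [->|ne] := eqVneq e' e.
  by rewrite (_ : [set _ | _] = setT) //; apply/seteqP; split.
rewrite (_ : [set _ | _] = [set x | A e' (W x e')]).
  exact: measurable_edge_preimage.
by apply/seteqP; split => x /=; [apply|move=> ? _].
Qed.

Variable P : probability T R.
Hypothesis indep : forall A : E -> set R, (forall e', measurable (A e')) ->
  P [set x | forall e', A e' (W x e')] =
  (P [set x | A e (W x e)] * P [set x | forall e', e' != e -> A e' (W x e')])%E.

Lemma cylinders_off_independent (A : set R) : measurable A ->
  cylinders_off `<=` independent_of P [set x | A (W x e)].
Proof.
move=> mA B cB; split; first exact: cylinders_off_measurable.
move: cB => [Ao [mAo ->]].
pose A' e' := if e' == e then A else Ao e'.
have mA' e' : measurable (A' e') by rewrite /A'; case: eqP.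
have := indep mA'.
rewrite (_ : [set x | forall e', A' e' (W x e')] =
   [set x | A (W x e)] `&` [set x | forall e', e' != e -> Ao e' (W x e')]).
  rewrite /A' eqxx => ->; congr (_ * P _)%E.
  by apply/seteqP; split => x /= H e' ne; have := H e' ne; rewrite (negPf ne).
apply/seteqP; split => x /=.
- move=> H; split; first by have := H e; rewrite /A' eqxx.
  by move=> e' ne; have := H e'; rewrite /A' (negPf ne).
- by move=> [He H] e'; rewrite /A'; case: eqP => [->//|/eqP ne]; exact: H.
Qed.

End OtherEdges.

Lemma density_itv_le (R : realType) d (T : measurableType d) (P : probability T R)
  (X : T -> R) (f : R -> R) (phi : R) (phi_gt0 : 0 < phi)
  (f_meas : measurable_fun (`]0, +oo[ : set R) f)
  (f_bound : forall y, 0 < y -> 0 <= f y <= phi)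
  (f_density : forall A : set R, measurable A ->
     P [set x | A (X x)] =
     (\int[lebesgue_measure]_(y in A `&` `](0%R:R), +oo[%classic) (f y)%:E)%E)
  (a b : R) : a <= b ->
  (P [set x | [set` `]a, b]] (X x)] <= (phi * (b - a))%:E)%E.
Proof.
move=> ab; rewrite f_density; last exact: measurable_itv.
set D := _ `&` _.
have mD : measurable D by apply: measurableI; exact: measurable_itv.
have D_gt0 y : D y -> 0 < y by case=> _; rewrite /= in_itv /= andbT.
apply: (@le_trans _ _ (\int[lebesgue_measure]_(y in D) (cst phi%:E) y)%E).
  apply: ge0_le_integral => //.
  - by move=> y /D_gt0 /f_bound /andP[]; rewrite lee_fin.
  - apply/measurable_EFinP; apply: measurable_funS f_meas => //.
    by move=> y /D_gt0; rewrite /= in_itv /= andbT.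
  - by move=> y /D_gt0 /f_bound /andP[_]; rewrite lee_fin.
rewrite integral_cst // EFinM; apply: lee_wpmul2l; first by rewrite lee_fin ltW.
apply: (@le_trans _ _ (lebesgue_measure [set` `]a, b]])).
  by apply: le_measure; rewrite ?inE //; apply: subIsetl.
rewrite lebesgue_measure_itv /=; case: ifPn => [_|]; first by rewrite -EFinB.
by rewrite lee_fin subr_ge0.
Qed.

Lemma trivIset_slabs (R : realType) (T : Type) (C : T -> \bar R) (delta : R) :
  0 < delta -> trivIset setT
    (fun k : nat => [set x | ((k%:R * delta)%:E <= C x)%E /\ (C x < (k.+1%:R * delta)%:E)%E]).
Proof.
move=> delta_gt0 i j _ _ [x [[i1 i2] [j1 j2]]].
wlog ij : i j i1 i2 j1 j2 / (i <= j)%N.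
  by move=> Hw; case: (leqP i j) => [|/ltnW] h; [|symmetry]; exact: Hw.
apply/eqP; rewrite eqn_leq ij /= leqNgt; apply/negP => ilt.
have : ((i.+1%:R * delta)%:E <= (j%:R * delta)%:E)%E by rewrite lee_fin ler_pM2r // ler_nat.
by move=> /le_trans /(_ j1) /le_lt_trans /(_ i2); rewrite ltxx.
Qed.

Section DensityWindow.
Variables (R : realType) (d : measure_display) (T : measurableType d).
Variables (P : probability T R) (X : T -> R) (C : T -> \bar R) (phi : R).
Hypothesis phi_gt0 : 0 < phi.
Hypothesis X_meas : measurable_fun setT X.
Hypothesis X_ge0 : forall x, 0 <= X x.
Hypothesis X_itv_le : forall a b, a <= b ->
  (P [set x | [set` `]a, b]] (X x)] <= (phi * (b - a))%:E)%E.
Hypothesis C_ge0 : forall x, (0 <= C x)%E.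
Hypothesis X_C_indep : forall a b s t : R,
  independent_of P [set x | [set` `]a, b]] (X x)]
    [set x | (s%:E <= C x)%E /\ (C x < t%:E)%E].
Variables (r eps : R).
Hypothesis eps_ge0 : 0 <= eps.

Let window := [set x | (r%:E < (X x)%:E + C x)%E /\ ((X x)%:E + C x <= (r + eps)%:E)%E].
Let X_in k delta := [set x | [set` `](r - k.+1%:R * delta), (r + eps - k%:R * delta)]] (X x)].
Let slab k delta := [set x | ((k%:R * delta)%:E <= C x)%E /\ (C x < (k.+1%:R * delta)%:E)%E].

Lemma window_sub_slabs delta N : 0 < delta -> r + eps < N%:R * delta ->
  window `<=` \big[setU/set0]_(k < N) (X_in k delta `&` slab k delta).
Proof.
move=> delta_gt0 rN.
rewrite -(bigcup_mkord N (fun k => X_in k delta `&` slab k delta)) => x [lo hi].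
move: lo hi (C_ge0 x); case Cx: (C x) => [y| |] lo hi y_ge0; last 2 first.
- by move: hi; rewrite addey // leye_eq.
- by move: y_ge0; rewrite leeNy_eq.
rewrite -EFinD lte_fin in lo; rewrite -EFinD lee_fin in hi; rewrite lee_fin in y_ge0.
have /andP[ky yk] := truncn_itv (divr_ge0 y_ge0 (ltW delta_gt0)).
rewrite ler_pdivlMr // ltr_pdivrMr // in ky yk.
have Xx_ge0 := X_ge0 x.
exists (Num.truncn (y / delta)); first by rewrite /= truncn_lt_nat ?ltr_pdivrMr //;
  [lra|exact: divr_ge0 (ltW delta_gt0)].
split; last by rewrite /slab /= Cx lee_fin lte_fin.
by rewrite /X_in /= in_itv /=; apply/andP; split; lra.
Qed.

Lemma window_le_slabs delta : 0 < delta -> measurable window ->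
  (P window <= (phi * (eps + delta))%:E)%E.
Proof.
move=> delta_gt0 mW.
pose N := (Num.truncn ((r + eps) / delta)).+1.
have rN : r + eps < N%:R * delta by rewrite -ltr_pdivrMr // truncnS_gt.
have XB k := X_C_indep (r - k.+1%:R * delta) (r + eps - k%:R * delta)
                       (k%:R * delta) (k.+1%:R * delta).
have mA k : measurable (X_in k delta).
  have := X_meas measurableT
            (measurable_itv `](r - k.+1%:R * delta), (r + eps - k%:R * delta)]).
  by rewrite setTI.
have mB k : measurable (slab k delta) by case: (XB k).
have mAB k : measurable (X_in k delta `&` slab k delta) by apply: measurableI.
have tB := trivIset_slabs (C := C) delta_gt0.
have mU : measurable (\big[setU/set0]_(k < N) (X_in k delta `&` slab k delta)).
  by apply: bigsetU_measurable => k _.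
apply: (le_trans (le_measure P (mem_set mW) (mem_set mU) (window_sub_slabs delta_gt0 rN))).
rewrite (measure_bigsetU P mAB (trivIset_setIl tB) N).
apply: (@le_trans _ _ (\sum_(k < N) ((phi * (eps + delta))%:E * P (slab k delta)))%E).
  apply: lee_sum => k _.
  apply: (@le_trans _ _ (P (X_in k delta) * P (slab k delta))%E).
    (* [rewrite] would fail: [P] is coerced to a function differently in [XB]. *)
    by rewrite le_eqVlt; apply/orP; left; apply/eqP; exact: (XB k).2.
  apply: lee_wpmul2r => //.
  have len : r + eps - k%:R * delta - (r - k.+1%:R * delta) = eps + delta.
    by rewrite -natr1; ring.
  have len_ge0 : 0 <= eps + delta by rewrite addr_ge0 // ltW.
  by rewrite -len; apply: X_itv_le; rewrite -subr_ge0 len.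
rewrite -ge0_sume_distrr // -(measure_bigsetU P mB tB N).
rewrite -[leRHS]mule1; apply: lee_wpmul2l.
  by rewrite lee_fin mulr_ge0 ?addr_ge0 // ltW.
by apply: probability_le1; apply: bigsetU_measurable => k _.
Qed.

Lemma window_le : measurable window -> (P window <= (phi * eps)%:E)%E.
Proof.
move=> mW; apply/lee_addgt0Pr => a a_gt0.
have := window_le_slabs (divr_gt0 a_gt0 phi_gt0) mW.
by rewrite mulrDr [phi * (a / phi)]mulrC divfK ?gt_eqF // EFinD.
Qed.

End DensityWindow.

Theorem lemma4 (R : realType) (V E : finType) (src tgt : E -> V)
  (col : E -> colour) (u v : V)
  (green_path : exists p, is_path src tgt u v p /\ all (fun x => is_green (col x)) p)
  (d : measure_display) (Omega : measurableType d) (P : probability Omega R)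
  (W : Omega -> E -> R)
  (W_meas : forall e', measurable_fun setT (fun x => W x e'))
  (W_pos : forall x e', 0 < W x e')
  (e : E) (e_red : col e = Red)
  (f : R -> R) (phi : R) (phi_pos : 0 < phi)
  (f_meas : measurable_fun (`]0, +oo[ : set R) f)
  (f_bound : forall y, 0 < y -> 0 <= f y <= phi)
  (f_density : forall A : set R, measurable A ->
     P [set x | A (W x e)] =
     (\int[lebesgue_measure]_(y in A `&` `](0%R:R), +oo[%classic) (f y)%:E)%E)
  (indep : forall A : E -> set R, (forall e', measurable (A e')) ->
     P [set x | forall e', A e' (W x e')] =
     (P [set x | A e (W x e)] * P [set x | forall e', e' != e -> A e' (W x e')])%E)
  (r eps : R) (r_ge0 : 0 <= r) (eps_ge0 : 0 <= eps) :
  (P [set x | (r%:E < Delta src tgt col u v e (W x) r)%E /\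
              (Delta src tgt col u v e (W x) r <= (r + eps)%:E)%E]
   <= (phi * eps)%:E)%E.
Proof.
pose C x := Delta src tgt col u v e (zero_at e (W x)) r.
have C_ge0 x : (0 <= C x)%E.
  by apply: Delta_ge0 => e'; rewrite /zero_at; case: eqP => // _; exact: ltW.
have slab_meas s t : <<s cylinders_off W e >> [set x | (s%:E <= C x)%E /\ (C x < t%:E)%E].
  have Wo_meas := zero_at_measurable_off (W := W) (e := e).
  exact: measurableI (measurable_Delta_ge src tgt col u v e r Wo_meas s)
                     (measurable_Delta_lt src tgt col u v e r Wo_meas t).
set S := [set x | _ /\ _].
have mS : measurable S.
  exact: measurableI (measurable_Delta_gt src tgt col u v e r W_meas r)
                     (measurable_Delta_le src tgt col u v e r W_meas (r + eps)).
have S_eq : S = [set x | (r%:E < (W x e)%:E + C x)%E /\ ((W x e)%:E + C x <= (r + eps)%:E)%E].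
  by apply/seteqP; split => x; rewrite /S /= Delta_split_off.
rewrite S_eq; apply: window_le => //; last by rewrite -S_eq.
- by move=> x; exact: ltW.
- by move=> a b; apply: (density_itv_le phi_pos f_meas f_bound f_density).
- move=> a b s t.
  apply: (sigma_independent_of (measurable_edge_preimage W_meas e (measurable_itv _))
            (cylinders_off_setI_closed (W := W) (e := e))); last exact: slab_meas.
  exact: cylinders_off_independent.
Qed.
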